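(* Let $G$ be a finite group and $H\leqslant G$ a subgroup. If $g_2(H)\geq N$, then $g_2(G)\geq N$.
   Context: For a finite group $G$ and positive integer $N$, $r_N(G)$ is the minimum number of generators among subgroups of $G$ of index at most $N$, and $g_k(G)=\max\{N : |G|\geq N \text{ and } r_N(G)\geq k\}$. *)

From mathcomp Require Import all_boot all_fingroup.
Set Implicit Arguments. Unset Strict Implicit. Unset Printing Implicit Defensive.
Local Open Scope group_scope.

Definition ngens (gT : finGroupType) (K : {set gT}) : nat :=
  \big[minn/#|K|]_(A : {set gT} | (A \subset K) && (<<A>> == K)) #|A|.

(* r_N(G): minimum of d(K) over subgroups K of G with |G:K| <= N.
   (The default d(G) is only relevant for N = 0, never used.) *)
Definition rN (gT : finGroupType) (N : nat) (G : {set gT}) : nat :=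
  \big[minn/ngens G]_(K : {group gT} | (K \subset G) && (#|G : K| <= N)) ngens K.

(* g_k(G) = max { N >= 1 : N <= |G| and r_N(G) >= k }, with value 0 if
   this set is empty. *)
Definition gk (gT : finGroupType) (k : nat) (G : {set gT}) : nat :=
  \max_(1 <= M < #|G|.+1 | k <= rN M G) M.

From mathcomp Require Import all_boot all_fingroup all_solvable.

Set Implicit Arguments.
Unset Strict Implicit.
Unset Printing Implicit Defensive.

(* A group needs at least two generators exactly when it is not cyclic, so
   [2 <= r_N(G)] says that no subgroup of index at most [N] in [G] is cyclic.
   This property passes from a subgroup [H] to [G]: if [K] has index at most
   [N] in [G], then [H :&: K] has index at most [N] in [H], hence is not
   cyclic, and neither is the larger group [K]. Since moreover [|H| <= |G|],
   every [N] counted in [g_2(H)] is counted in [g_2(G)]. *)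

Lemma bigminn_leq (I : finType) (P : pred I) (F : I -> nat) x j :
  P j -> \big[minn/x]_(i | P i) F i <= F j.
Proof.
move=> Pj; have: j \in index_enum I by rewrite mem_index_enum.
elim: (index_enum I) => //= a r IHr; rewrite inE big_cons.
case/orP=> [/eqP<- | /IHr le_r_Fj]; first by rewrite Pj geq_minl.
by case: (P a); rewrite // geq_min le_r_Fj orbT.
Qed.

Lemma leq_bigminn (I : finType) (P : pred I) (F : I -> nat) x k :
  k <= x -> (forall i, P i -> k <= F i) -> k <= \big[minn/x]_(i | P i) F i.
Proof.
move=> le_kx le_kF; apply: (big_ind (leq k)) => // a b ka kb.
by rewrite leq_min ka kb.
Qed.

Local Open Scope group_scope.

Lemma leq_indexSg (gT : finGroupType) (G H K : {set gT}) :
  H \subset G -> #|H : K| <= #|G : K|.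
Proof. by move=> sHG; apply/subset_leq_card/imsetS. Qed.

Lemma ngens_le1 (gT : finGroupType) (K : {group gT}) :
  (ngens K <= 1) = cyclic K.
Proof.
apply/idP/idP=> [le_ngens1 | /cyclicP[x defK]].
  apply: contraLR le_ngens1 => ncycK; rewrite -ltnNge.
  apply: leq_bigminn => [|A /andP[_ /eqP genA]].
    by rewrite ltnNge; apply: contra ncycK => /card_le1_trivg->; apply: cyclic1.
  rewrite ltnNge; apply: contra ncycK => A_le1.
  rewrite -genA; have [-> | [a Aa]] := set_0Vmem A; first by rewrite gen0 cyclic1.
  have -> : A = [set a] by apply/eqP; rewrite eq_sym eqEcard sub1set Aa cards1.
  exact: cycle_cyclic.
rewrite -(cards1 x); apply: bigminn_leq.
by rewrite defK sub1set cycle_id eqxx.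
Qed.

Lemma rN_gt1 (gT : finGroupType) (G : {group gT}) M : 0 < M ->
  1 < rN M G <->
  (forall K : {group gT}, K \subset G -> #|G : K| <= M -> ~~ cyclic K).
Proof.
have ncyc_ngens (K : {group gT}) : (~~ cyclic K) = (1 < ngens K).
  by rewrite -ngens_le1 ltnNge.
move=> M_gt0; split=> [rNG_gt1 K sKG le_KM | ncycG].
  rewrite ncyc_ngens; apply: leq_trans rNG_gt1 _.
  by apply: bigminn_leq; rewrite sKG le_KM.
apply: leq_bigminn => [|K /andP[sKG le_KM]]; rewrite -ncyc_ngens.
  by apply: ncycG; rewrite ?indexgg.
exact: ncycG.
Qed.

Lemma rN_gt1_subgroup (gT : finGroupType) (G H : {group gT}) M :
  H \subset G -> 0 < M -> 1 < rN M H -> 1 < rN M G.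
Proof.
move=> sHG M_gt0 /(rN_gt1 H M_gt0) ncycH; apply/(rN_gt1 G M_gt0) => K _ le_KM.
apply: contra (ncycH (H :&: K)%G (subsetIl H K) _); first exact/cyclicS/subsetIr.
by rewrite indexgI (leq_trans (leq_indexSg K sHG)).
Qed.

Theorem mainTheorem15 (gT : finGroupType) (G H : {group gT}) (N : nat) :
  H \subset G -> N <= gk 2 H -> N <= gk 2 G.
Proof.
move=> sHG /leq_trans; apply; apply/bigmax_leqP_seq => M.
rewrite mem_index_iota => /andP[M_gt0 le_M_H] rNH_gt1.
apply: leq_bigmax_seq; last exact: rN_gt1_subgroup rNH_gt1.
by rewrite mem_index_iota M_gt0 (leq_trans le_M_H) // ltnS subset_leq_card.
Qed.
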